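(* Let $(Q,\le_Q)$ be a non-empty quasi-order. The map $f:\mathsf{T_f}(Q)\to i^F_{\omega^\omega}(Q)$ is an order-embedding: for all $\sigma,\tau\in\mathsf{T_f}(Q)$, $\sigma\le_T\tau$ iff $f(\sigma)\preceq f(\tau)$.
   Context: Trees: $\mathsf{T_f}(Q)$ is the smallest class containing the leaf $\cdot q$ for each $q\in Q$, and containing $\cdot(\tau_0,\dots,\tau_{k-1})$ (an unlabelled root whose children are the $\tau_i$) for every finite set $\{\tau_0,\dots,\tau_{k-1}\}\subseteq\mathsf{T_f}(Q)$ with $k\ge1$. Its order $\le_T$ is defined recursively: - $\cdot x\le_T\cdot y$ iff $x\le_Q y$; - $\cdot x\le_T\cdot(\tau_j)_{j<l}$ iff $\cdot x\le_T\tau_j$ for some $j$; - $\cdot(\sigma_i)_{i<k}\le_T\cdot(\tau_j)_{j<l}$ iff every $\sigma_i$ is $\le_T$ some $\tau_j$; - a non-leaf tree is never $\le_T$ a leaf. Sequences: a transfinite sequence over $Q$ of length $\alpha$ (with $\alpha\ne0$) is a function $\sigma:\alpha\to Q$. Define $\sigma\preceq\tau$ if there is a strictly increasing $f:|\sigma|\to|\tau|$ with $\sigma(i)\le_Q\tau(f(i))$ for all $i$. The concatenation $\sigma+\tau$ places a copy of $\tau$ after $\sigma$. The sequence $\rho^\omega$ has length $|\rho|\cdot\omega$ and value $\rho^\omega(|\rho|\cdot\delta+\iota)=\rho(\iota)$ for $\delta<\omega$ and $\iota<|\rho|$. The sequence $\sigma$ is indecomposable if it embeds into each of its proper tails $i\mapsto\sigma(\delta+i)$,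 $0<\delta<|\sigma|$. $i^F_{\omega^\omega}(Q)$ is the set of indecomposable sequences over $Q$ with finite range and length $<\omega^\omega$, ordered by $\preceq$. The map $f$ is defined recursively: - $f(\cdot q)=\langle q\rangle$, the length-one sequence; - $f(\cdot(\tau_0,\dots,\tau_{k-1}))=(f(\tau_0)+f(\tau_1)+\cdots+f(\tau_{k-1}))^\omega$. A tree of height $n$ is sent to a sequence of length $\omega^n$ whose range is the set of leaf labels, so $f$ indeed lands in $i^F_{\omega^\omega}(Q)$. *)

From Stdlib Require Import List.
Import ListNotations.
Set Implicit Arguments.

(** Finite trees T_f(Q): a leaf labelled by q, or an unlabelled root with a
    (non-empty, see [wf_tree]) finite family of children, given as a list. *)
Inductive tree (Q : Type) : Type :=
| Leaf : Q -> tree Q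
| Node : list (tree Q) -> tree Q.
Arguments Leaf {Q} _.
Arguments Node {Q} _.

Inductive wf_tree {Q : Type} : tree Q -> Prop :=
| wf_leaf : forall q, wf_tree (Leaf q)
| wf_node : forall ts, ts <> [] -> (forall t, In t ts -> wf_tree t) ->
    wf_tree (Node ts).

Inductive leT {Q : Type} (leQ : Q -> Q -> Prop) : tree Q -> tree Q -> Prop :=
| leT_leaf_leaf : forall x y, leQ x y -> leT leQ (Leaf x) (Leaf y)
| leT_leaf_node : forall x ts t, In t ts -> leT leQ (Leaf x) t ->
    leT leQ (Leaf x) (Node ts)
| leT_node_node : forall ss ts,
    (forall s, In s ss -> exists t, In t ts /\ leT leQ s t) ->
    leT leQ (Node ss) (Node ts).

(** Transfinite sequences: a value function on an index set carrying a strict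
    (well-)order; the length is the order type of the index set.  All
    sequences built below have well-ordered index sets. *)
Record tseq (Q : Type) : Type := TSeq {
  tidx : Type;
  tlt : tidx -> tidx -> Prop;
  tval : tidx -> Q }.
Arguments TSeq {Q} _ _ _.

Definition seq_embeds {Q : Type} (leQ : Q -> Q -> Prop) (s t : tseq Q) : Prop :=
  exists g : tidx s -> tidx t,
    (forall i j, tlt s i j -> tlt t (g i) (g j)) /\
    (forall i, leQ (tval s i) (tval t (g i))).

Definition seq_single {Q : Type} (q : Q) : tseq Q :=
  TSeq unit (fun _ _ => False) (fun _ => q).

Definition seq_empty (Q : Type) : tseq Q :=
  TSeq Empty_set (fun _ _ => False) (fun e => match e with end).

Definition sum_lt {A B : Type} (ltA : A -> A -> Prop) (ltB : B -> B -> Prop)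
  (x y : A + B) : Prop :=
  match x, y with
  | inl a, inl a' => ltA a a'
  | inr b, inr b' => ltB b b'
  | inl _, inr _ => True
  | inr _, inl _ => False
  end.

Definition seq_cat {Q : Type} (s t : tseq Q) : tseq Q :=
  TSeq (tidx s + tidx t)%type (sum_lt (tlt s) (tlt t))
       (fun x => match x with inl i => tval s i | inr j => tval t j end).

Definition seq_cat_list {Q : Type} (l : list (tseq Q)) : tseq Q :=
  fold_right seq_cat (seq_empty Q) l.

(** rho^omega : indices |rho|*delta + iota, i.e. pairs (delta, iota) with
    delta < omega, ordered lexicographically (delta first). *)
Definition seq_omega {Q : Type} (r : tseq Q) : tseq Q :=
  TSeq (nat * tidx r)%type
       (fun x y => fst x < fst y \/ (fst x = fst y /\ tlt r (snd x) (snd y)))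
       (fun x => tval r (snd x)).

Fixpoint ftree {Q : Type} (t : tree Q) : tseq Q :=
  match t with
  | Leaf q => seq_single q
  | Node ts => seq_omega (seq_cat_list (map ftree ts))
  end.

(* Write C(t) for the concatenation of the images of the children of t, so that
   f(t) = C(t)^omega.  If every child of s lies below a child of t, then C(s)
   embeds into the first length(s) copies of C(t) inside C(t)^omega, and doing
   this copy by copy embeds C(s)^omega into C(t)^omega.

   Conversely, every f(t) embeds into each of its tails.  Given an embedding
   of C(s)^omega into C(t)^omega, the first copy of C(s) lies below the second,
   so its image meets only finitely many copies of C(t); restricting a child
   image f(s_i) to the tail from a point in the last copy it meets puts all of
   f(s_i) into one copy of C(t), and the same tail argument then puts it into a
   single f(t_j).  Induction on the trees concludes; a node is never below a
   leaf because an omega-power has two comparable indices. *)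

From Stdlib Require Import List Classical Lia.
Import ListNotations.

Section NestedTreeInduction.
Context {Q : Type} (P : tree Q -> Prop).
Hypothesis P_leaf : forall q, P (Leaf q).
Hypothesis P_node : forall ts, (forall t, In t ts -> P t) -> P (Node ts).

Fixpoint tree_nested_ind (t : tree Q) : P t :=
  match t with
  | Leaf q => P_leaf q
  | Node ts => P_node ts
      ((fix in_children (l : list (tree Q)) : forall t, In t l -> P t :=
          match l with
          | [] => fun t H => False_ind _ H
          | u :: l' => fun t H =>
              match H with
              | or_introl e => eq_rect _ P (tree_nested_ind u) _ e
              | or_intror H' => in_children l' t H'
              end
          end) ts)
  end.

End NestedTreeInduction.

Section Embeddings.
Context {Q : Type} (leQ : Q -> Q -> Prop).
Hypothesis leQ_refl : forall x, leQ x x.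
Hypothesis leQ_trans : forall x y z, leQ x y -> leQ y z -> leQ x z.

Definition is_embedding (s t : tseq Q) (g : tidx s -> tidx t) : Prop :=
  (forall i j, tlt s i j -> tlt t (g i) (g j)) /\
  (forall i, leQ (tval s i) (tval t (g i))).

Lemma is_embedding_comp {s t u : tseq Q} {g h} :
  is_embedding s t g -> is_embedding t u h -> is_embedding s u (fun i => h (g i)).
Proof. intros [Hg Hgv] [Hh Hhv]; split; eauto. Qed.

Lemma seq_embeds_trans (s t u : tseq Q) :
  seq_embeds leQ s t -> seq_embeds leQ t u -> seq_embeds leQ s u.
Proof.
  intros [g Hg] [h Hh]. exists (fun i => h (g i)). exact (is_embedding_comp Hg Hh).
Qed.

Lemma seq_embeds_single (x : Q) (t : tseq Q) :
  seq_embeds leQ (seq_single x) t <-> exists i, leQ x (tval t i).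
Proof.
  split.
  - intros [g [_ Hv]]. exists (g tt). exact (Hv tt).
  - intros [i Hi]. exists (fun _ => i). split; [intros ? ? []| intros; exact Hi].
Qed.

Lemma seq_omega_not_embeds_single {r : tseq Q} {q : Q} :
  inhabited (tidx r) -> ~ seq_embeds leQ (seq_omega r) (seq_single q).
Proof.
  intros [a] [g [Hg _]]. apply (Hg (0, a) (1, a)). simpl. left. lia.
Qed.

Lemma seq_cat_list_component {L : list (tseq Q)} {s : tseq Q} : In s L ->
  exists inj : tidx s -> tidx (seq_cat_list L),
    (forall i j, tlt s i j -> tlt _ (inj i) (inj j)) /\
    (forall i, tval _ (inj i) = tval s i).
Proof.
  induction L as [|x L IH]; simpl; [contradiction|]; intros [<-|Hs].
  - exists inl. split; simpl; auto.
  - destruct (IH Hs) as [inj [Hinj Hval]]. exists (fun i => inr (inj i)).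
    split; simpl; auto.
Qed.

Lemma seq_embeds_cat_list {L : list (tseq Q)} {s : tseq Q} :
  In s L -> seq_embeds leQ s (seq_cat_list L).
Proof.
  intros Hs. destruct (seq_cat_list_component Hs) as [inj [Hinj Hval]].
  exists inj. split; [exact Hinj|]. intros i. rewrite Hval. apply leQ_refl.
Qed.

Lemma seq_cat_list_val {L : list (tseq Q)} (c : tidx (seq_cat_list L)) :
  exists s, In s L /\ exists a, tval s a = tval _ c.
Proof.
  induction L as [|x L IH]; simpl in c; [destruct c|]; destruct c as [a|c].
  - exists x. split; [left; reflexivity|]. exists a. reflexivity.
  - destruct (IH c) as [s [Hs Hval]]. exists s. split; [right|]; assumption.
Qed.

Definition embeds_omega_below (k : nat) (s r : tseq Q) : Prop :=
  exists g, is_embedding s (seq_omega r) g /\ forall i, fst (g i) < k.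

Lemma embeds_omega_below_comp {k : nat} {s x r : tseq Q} :
  seq_embeds leQ s x -> embeds_omega_below k x r -> embeds_omega_below k s r.
Proof.
  intros [h Hh] [g [Hg Hbound]].
  exists (fun i => g (h i)). split; [exact (is_embedding_comp Hh Hg) | auto].
Qed.

Lemma embeds_omega_below_cat_list (L : list (tseq Q)) (r : tseq Q) :
  (forall s, In s L -> seq_embeds leQ s r) ->
  embeds_omega_below (length L) (seq_cat_list L) r.
Proof.
  induction L as [|x L IH]; intros HL.
  - exists (fun e : Empty_set => match e with end). split; [split|]; intros [].
  - destruct (HL x (or_introl eq_refl)) as [h [Hh Hhv]].
    destruct IH as [g [[Hg Hgv] Hbound]]; [intros s Hs; apply HL; right; exact Hs|].
    exists (fun c : tidx x + tidx (seq_cat_list L) =>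
      match c with inl a => (0, h a) | inr c => (S (fst (g c)), snd (g c)) end).
    split; [split|].
    + intros [a|c] [a'|c'] Hlt; simpl in *; try contradiction.
      * right. auto.
      * left. lia.
      * destruct (Hg _ _ Hlt) as [Lt|[Eq Lt]]; [left; lia | right; auto].
    + intros [a|c]; simpl; auto.
    + intros [a|c]; simpl; [lia|]. specialize (Hbound c). simpl in Hbound. lia.
Qed.

(* The copy [n] of [s] goes to the copies [n * k] to [n * k + k - 1] of [r]. *)
Lemma seq_omega_embeds_of_below (k : nat) (s r : tseq Q) :
  embeds_omega_below k s r -> seq_embeds leQ (seq_omega s) (seq_omega r).
Proof.
  intros [g [[Hg Hgv] Hbound]].
  exists (fun p : nat * tidx s => (fst p * k + fst (g (snd p)), snd (g (snd p)))).
  split.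
  - intros [n x] [n' x'] [Lt|[Eq Lt]]; simpl in *.
    + left. pose proof (Hbound x). pose proof (Hbound x'). nia.
    + subst. destruct (Hg _ _ Lt) as [Lt'|[Eq' Lt']]; [left; lia | right; auto].
  - intros [n x]. apply Hgv.
Qed.

Lemma embeds_omega_below_of_seq_omega {s r : tseq Q} : inhabited (tidx s) ->
  seq_embeds leQ (seq_omega s) (seq_omega r) -> exists k, embeds_omega_below k s r.
Proof.
  intros [a0] [g [Hg Hgv]].
  exists (S (fst (g (1, a0)))), (fun a => g (0, a)). split; [split|].
  - intros i j Hij. apply Hg. right. auto.
  - intros i. apply (Hgv (0, i)).
  - intros a. destruct (Hg (0, a) (1, a0)) as [Lt|[Eq _]]; [simpl; left; lia | lia | lia].
Qed.

Definition indecomposable (s : tseq Q) : Prop :=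
  forall a, exists phi, is_embedding s s phi /\ forall b, phi b = a \/ tlt s a (phi b).

Lemma indecomposable_single (q : Q) : indecomposable (seq_single q).
Proof.
  intros []. exists (fun b => b). split; [split; auto|]. intros []. left. reflexivity.
Qed.

Lemma indecomposable_omega (r : tseq Q) : indecomposable (seq_omega r).
Proof.
  intros [n c]. exists (fun p : nat * tidx r => (S (fst p + n), snd p)).
  split; [split|].
  - intros [m x] [m' x'] [Lt|[Eq Lt]]; simpl in *; [left; lia | right; auto].
  - intros [m x]. apply leQ_refl.
  - intros [m x]. right. simpl. left. lia.
Qed.

Lemma seq_embeds_of_cat_inl {s X Y : tseq Q} {h} : inhabited (tidx s) ->
  is_embedding s (seq_cat X Y) h -> (forall i, exists x, h i = inl x) ->
  seq_embeds leQ s X.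
Proof.
  intros [a0] [Hh Hhv] Hl. destruct (Hl a0) as [x0 _].
  exists (fun i => match h i with inl x => x | inr _ => x0 end). split.
  - intros i j Hij. specialize (Hh _ _ Hij).
    destruct (Hl i) as [xi Ei], (Hl j) as [xj Ej]. rewrite Ei, Ej in *. exact Hh.
  - intros i. specialize (Hhv i). destruct (Hl i) as [xi Ei]. rewrite Ei in *. exact Hhv.
Qed.

Lemma seq_embeds_of_cat_inr {s X Y : tseq Q} {h} : inhabited (tidx s) ->
  is_embedding s (seq_cat X Y) h -> (forall i, exists y, h i = inr y) ->
  seq_embeds leQ s Y.
Proof.
  intros [a0] [Hh Hhv] Hr. destruct (Hr a0) as [y0 _].
  exists (fun i => match h i with inr y => y | inl _ => y0 end). split.
  - intros i j Hij. specialize (Hh _ _ Hij).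
    destruct (Hr i) as [yi Ei], (Hr j) as [yj Ej]. rewrite Ei, Ej in *. exact Hh.
  - intros i. specialize (Hhv i). destruct (Hr i) as [yi Ei]. rewrite Ei in *. exact Hhv.
Qed.

(* If some index lands in [Y], so does the tail after it, and [s] embeds into it. *)
Lemma indecomposable_embeds_cat {s X Y : tseq Q} :
  indecomposable s -> inhabited (tidx s) -> seq_embeds leQ s (seq_cat X Y) ->
  seq_embeds leQ s X \/ seq_embeds leQ s Y.
Proof.
  intros Hs Hinh [h Hh].
  destruct (classic (exists a y, h a = inr y)) as [[a [y Ha]] | Hleft].
  - right. destruct (Hs a) as [phi [Hphi Habove]].
    apply (seq_embeds_of_cat_inr Hinh (is_embedding_comp Hphi Hh)). intros b.
    destruct (h (phi b)) as [x|y'] eqn:E; [exfalso | eauto].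
    destruct (Habove b) as [Eb|Lt].
    + rewrite Eb, Ha in E. discriminate.
    + pose proof (proj1 Hh _ _ Lt) as Hlt. rewrite Ha, E in Hlt. exact Hlt.
  - left. apply (seq_embeds_of_cat_inl Hinh Hh). intros b.
    destruct (h b) as [x|y] eqn:E; eauto. exfalso. eauto.
Qed.

Lemma indecomposable_embeds_cat_list {s : tseq Q} {L : list (tseq Q)} :
  indecomposable s -> inhabited (tidx s) -> seq_embeds leQ s (seq_cat_list L) ->
  exists t, In t L /\ seq_embeds leQ s t.
Proof.
  intros Hs Hinh. induction L as [|x L IH]; intros HL.
  - destruct Hinh as [a0], HL as [h _]. destruct (h a0).
  - destruct (indecomposable_embeds_cat Hs Hinh HL) as [Hx|HL'].
    + exists x. split; [left; reflexivity | exact Hx].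
    + destruct (IH HL') as [t [Ht Hst]]. exists t. split; [right|]; assumption.
Qed.

(* The tail after an index in the last copy [m] of [r] stays inside that copy. *)
Lemma indecomposable_embeds_last_block {s r : tseq Q} {g} {m : nat} {a} :
  indecomposable s -> is_embedding s (seq_omega r) g ->
  (forall i, fst (g i) <= m) -> fst (g a) = m -> seq_embeds leQ s r.
Proof.
  intros Hs Hg Hbound Ha. destruct (Hs a) as [phi [Hphi Habove]].
  pose proof (is_embedding_comp Hphi Hg) as [Hh Hhv].
  assert (Hblock : forall b, fst (g (phi b)) = m).
  { intros b. specialize (Hbound (phi b)).
    destruct (Habove b) as [-> | Lt]; [exact Ha|].
    destruct (proj1 Hg a (phi b) Lt) as [Lt' | [Eq _]]; lia. }
  exists (fun b => snd (g (phi b))). split.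
  - intros i j Hij. destruct (Hh i j Hij) as [Lt | [_ Lt]]; [|exact Lt].
    rewrite !Hblock in Lt. lia.
  - exact Hhv.
Qed.

Lemma indecomposable_embeds_of_below {k : nat} {s r : tseq Q} :
  indecomposable s -> inhabited (tidx s) -> embeds_omega_below k s r ->
  seq_embeds leQ s r.
Proof.
  intros Hs [a0]. induction k as [|k IH]; intros [g [Hg Hbound]].
  - specialize (Hbound a0). lia.
  - destruct (classic (exists a, fst (g a) = k)) as [[a Ha] | Hnone].
    + apply (indecomposable_embeds_last_block Hs Hg (m := k) (a := a)); [|exact Ha].
      intros i. specialize (Hbound i). lia.
    + apply IH. exists g. split; [exact Hg|]. intros i.
      specialize (Hbound i). assert (fst (g i) <> k) by eauto. lia.
Qed.

Lemma ftree_inhabited {t : tree Q} : wf_tree t -> inhabited (tidx (ftree t)).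
Proof.
  induction 1 as [q|ts Hne _ IH]; [exact (inhabits tt)|].
  destruct ts as [|t0 ts]; [congruence|].
  destruct (IH t0 (or_introl eq_refl)) as [a]. exact (inhabits (0, inl a)).
Qed.

Lemma indecomposable_ftree (t : tree Q) : indecomposable (ftree t).
Proof. destruct t; [apply indecomposable_single | apply indecomposable_omega]. Qed.

Lemma leT_leaf_ftree (x : Q) (t : tree Q) :
  leT leQ (Leaf x) t <-> exists i, leQ x (tval (ftree t) i).
Proof.
  induction t as [q|ts IH] using tree_nested_ind; split.
  - intros H. inversion H; subst. exists tt. assumption.
  - intros [[] Hx]. constructor. exact Hx.
  - intros H. inversion H as [|? ? t Ht Hxt|]; subst.
    destruct (proj1 (IH t Ht) Hxt) as [i Hi].
    destruct (seq_cat_list_component (in_map ftree _ _ Ht)) as [inj [_ Hval]].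
    exists (0, inj i). simpl. rewrite Hval. exact Hi.
  - intros [[n c] Hx]. simpl in Hx.
    destruct (seq_cat_list_val c) as [s [Hs [a Ha]]].
    apply in_map_iff in Hs. destruct Hs as [t [<- Ht]].
    apply leT_leaf_node with t; [exact Ht|].
    apply IH; [exact Ht|]. exists a. rewrite Ha. exact Hx.
Qed.

Lemma leT_ftree_embeds (s t : tree Q) :
  leT leQ s t -> seq_embeds leQ (ftree s) (ftree t).
Proof.
  revert t. induction s as [x|ss IH] using tree_nested_ind; intros t Hst.
  - apply seq_embeds_single. apply leT_leaf_ftree. exact Hst.
  - inversion Hst as [| |? ts Hchildren]; subst. simpl.
    apply seq_omega_embeds_of_below with (length (map ftree ss)).
    apply embeds_omega_below_cat_list. intros fs Hfs.
    apply in_map_iff in Hfs. destruct Hfs as [s [<- Hs]].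
    destruct (Hchildren s Hs) as [t [Ht Hst']].
    apply seq_embeds_trans with (ftree t); [apply IH; assumption|].
    apply seq_embeds_cat_list. apply in_map. exact Ht.
Qed.

Lemma ftree_embeds_leT (s t : tree Q) : wf_tree s -> wf_tree t ->
  seq_embeds leQ (ftree s) (ftree t) -> leT leQ s t.
Proof.
  intros ws. revert t. induction ws as [x|ss Hne Hwf IH]; intros t wt Hst.
  - apply leT_leaf_ftree. apply seq_embeds_single. exact Hst.
  - destruct (ftree_inhabited (wf_node Hne Hwf)) as [[_ c]].
    destruct wt as [y|ts _ Hwf_ts].
    + exfalso. exact (seq_omega_not_embeds_single (inhabits c) Hst).
    + constructor. intros s Hs.
      pose proof (ftree_inhabited (Hwf s Hs)) as Hs_inh.
      destruct (embeds_omega_below_of_seq_omega (inhabits c) Hst) as [k Hk].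
      pose proof (embeds_omega_below_comp
                    (seq_embeds_cat_list (in_map ftree _ _ Hs)) Hk) as Hbelow.
      pose proof (indecomposable_embeds_of_below (indecomposable_ftree s) Hs_inh Hbelow)
        as Hcat.
      destruct (indecomposable_embeds_cat_list (indecomposable_ftree s) Hs_inh Hcat)
        as [ft [Hft Hs_ft]].
      apply in_map_iff in Hft. destruct Hft as [t [<- Ht]].
      exists t. split; [exact Ht|]. apply IH; [exact Hs| |exact Hs_ft].
      exact (Hwf_ts t Ht).
Qed.

End Embeddings.

Theorem lemma4p18 (Q : Type) (leQ : Q -> Q -> Prop)
  (refl : forall x, leQ x x)
  (trans : forall x y z, leQ x y -> leQ y z -> leQ x z)
  (nonempty : inhabited Q)
  (s t : tree Q) (ws : wf_tree s) (wt : wf_tree t) :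
  leT leQ s t <-> seq_embeds leQ (ftree s) (ftree t).
Proof.
  split.
  - apply leT_ftree_embeds; assumption.
  - apply ftree_embeds_leT; assumption.
Qed.
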